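(* Let $d\ge2$ and $m=2^{d-1}$. The $d$-layer skip RNN graph with skip lengths $k_l=2^{l-1}$ ($l=1,\dots,d$) and the $d$-layer dilated RNN graph with dilations $s_l=2^{l-1}$ ($l=1,\dots,d$) have the same values of $\mathcal d_i(n)$ for all $i\in\mathbb Z$ and $1\le n\le m$, and hence the same mean recurrent length with period $m$.
   Context: Dilated RNN graph with dilations $s_1,\dots,s_d$: vertex set $\{x_t: t\in\mathbb Z\}\cup\{c^{(l)}_t: t\in\mathbb Z,\ 1\le l\le d\}$, edges $x_t\to c^{(1)}_t$, $c^{(l)}_t\to c^{(l+1)}_t$ for $1\le l<d$, and $c^{(l)}_t\to c^{(l)}_{t+s_l}$ for $1\le l\le d$ (all edges). Skip RNN graph with skip lengths $k_1,\dots,k_d$: same vertex set and the same edges $x_t\to c^{(1)}_t$, $c^{(l)}_t\to c^{(l+1)}_t$, together with both $c^{(l)}_t\to c^{(l)}_{t+1}$ and $c^{(l)}_t\to c^{(l)}_{t+k_l}$ for each $l$ (all edges). In both graphs $x_t$ is the input and $c^{(d)}_t$ the output at time $t$; $\mathcal d_i(n)$ is the number of edges of a shortest directed path from $x_i$ to $c^{(d)}_{i+n}$; the mean recurrent length with period $m$ is $\bar{\mathcal d}=\frac1m\sum_{n=1}^{m}\max_{i\in\mathbb Z}\mathcal d_i(n)$. *)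

From mathcomp Require Import all_boot all_order all_algebra.
Set Implicit Arguments. Unset Strict Implicit. Unset Printing Implicit Defensive.
Import Order.TTheory GRing.Theory Num.Theory.

(* Vertices: x_t (input) and c^(l)_t (hidden node of layer l at time t). *)
Inductive vtx : Type := X of int | C of nat & int.

Definition dilated_edge (d : nat) (s : nat -> nat) (u v : vtx) : Prop :=
  match u, v with
  | X t, C l t' => l = 1%N /\ t' = t
  | C l t, C l' t' =>
      ((1 <= l)%N /\ (l < d)%N /\ l' = l.+1 /\ t' = t)
   \/ ((1 <= l)%N /\ (l <= d)%N /\ l' = l /\ t' = (t + (s l)%:Z)%R)
  | _, _ => False
  end.

Definition skip_edge (d : nat) (k : nat -> nat) (u v : vtx) : Prop :=
  match u, v with
  | X t, C l t' => l = 1%N /\ t' = t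
  | C l t, C l' t' =>
      ((1 <= l)%N /\ (l < d)%N /\ l' = l.+1 /\ t' = t)
   \/ ((1 <= l)%N /\ (l <= d)%N /\ l' = l /\ t' = (t + 1)%R)
   \/ ((1 <= l)%N /\ (l <= d)%N /\ l' = l /\ t' = (t + (k l)%:Z)%R)
  | _, _ => False
  end.

Inductive walk (e : vtx -> vtx -> Prop) : vtx -> vtx -> nat -> Prop :=
  | walk0 u : walk e u u 0
  | walkS u w v n : e u w -> walk e w v n -> walk e u v n.+1.

Definition dist (e : vtx -> vtx -> Prop) (u v : vtx) (n : nat) : Prop :=
  walk e u v n /\ forall n', walk e u v n' -> (n <= n')%N.

(* rec_len e d n D : D = max_{i in Z} d_i(n), where d_i(n) = dist from x_i to c^(d)_{i+n}. *)
Definition rec_len_max (e : vtx -> vtx -> Prop) (d n D : nat) : Prop :=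
  (exists i : int, dist e (X i) (C d (i + n%:Z)%R) D) /\
  (forall (i : int) (k : nat), dist e (X i) (C d (i + n%:Z)%R) k -> (k <= D)%N).

Definition mean_rec_len (e : vtx -> vtx -> Prop) (d m : nat) (r : rat) : Prop :=
  exists D : nat -> nat,
    (forall n, (1 <= n <= m)%N -> rec_len_max e d n (D n)) /\
    r = ((\sum_(1 <= n < m.+1) (D n)%:R) / m%:R)%R.

Definition pow2pred (l : nat) : nat := 2 ^ (l.-1).

(** In both graphs the only horizontal edges on layer 1 advance time by 1,
    since s 1 = k 1 = 1, and the extra unit edges of the skip graph on higher
    layers do not shorten any path leaving an input: all unit steps of a path
    can be moved down to layer 1, turning a skip-graph path from x_i into a
    dilated-graph path with the same endpoints and no more edges.  Hence the
    distances from inputs coincide in the two graphs, and so do all the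
    quantities built on them.  Since both graphs are invariant under time
    translation, d_i(n) does not depend on i, so the maxima over i exist. *)

From mathcomp Require Import all_boot all_order all_algebra.
From mathcomp Require Import zify.
From Stdlib Require Import Classical ClassicalEpsilon Wf_nat.
Import GRing.Theory.
Set Implicit Arguments. Unset Strict Implicit.

Local Open Scope ring_scope.

Definition shiftv (c : int) (u : vtx) : vtx :=
  match u with X t => X (t + c) | C l t => C l (t + c) end.

Lemma shiftvK c : cancel (shiftv c) (shiftv (- c)).
Proof. by case=> [t|l t] /=; rewrite addrK. Qed.

Definition shift_invariant (e : vtx -> vtx -> Prop) : Prop :=
  forall c u v, e u v -> e (shiftv c u) (shiftv c v).

Lemma walk_map (e e' : vtx -> vtx -> Prop) (f : vtx -> vtx) :
  (forall u v, e u v -> e' (f u) (f v)) ->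
  forall u v n, walk e u v n -> walk e' (f u) (f v) n.
Proof.
move=> ee' u v n; elim=> [w|x w y k exw _ IH]; first exact: walk0.
exact: walkS (ee' _ _ exw) IH.
Qed.

Lemma walk_sub (e e' : vtx -> vtx -> Prop) :
  (forall u v, e u v -> e' u v) -> forall u v n, walk e u v n -> walk e' u v n.
Proof. by move=> ee'; apply: (@walk_map e e' id). Qed.

Lemma dist_unique e u v a b : dist e u v a -> dist e u v b -> a = b.
Proof. by move=> [Wa Ma] [Wb Mb]; apply/eqP; rewrite eqn_leq Ma ?Mb. Qed.

Lemma dist_exists e u v n : walk e u v n -> exists k, dist e u v k.
Proof.
move=> W.
have [k [[Wk Mk] _]] :=
  dec_inh_nat_subset_has_unique_least_element (walk e u v) (fun n => classic (walk e u v n))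
    (ex_intro _ n W).
by exists k; split=> // n' /Mk /leP.
Qed.

Lemma dist_shift e c u v n :
  shift_invariant e -> dist e u v n -> dist e (shiftv c u) (shiftv c v) n.
Proof.
move=> sh_e [W M]; split; first exact: walk_map (sh_e c) _ _ _ W.
by move=> n' /(walk_map (sh_e (- c))); rewrite !shiftvK; apply: M.
Qed.

Lemma dist_sub_shortcut (e e' : vtx -> vtx -> Prop) u v k :
  (forall a b, e' a b -> e a b) ->
  (forall n, walk e u v n -> exists2 n', (n' <= n)%N & walk e' u v n') ->
  dist e u v k <-> dist e' u v k.
Proof.
move=> e'e shortcut; split=> [[W M]|[W M]].
- have [k' le_k'k W'] := shortcut _ W.
  have /eqP eq_k'k : k' == k by rewrite eqn_leq le_k'k M //; apply: walk_sub W'.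
  by rewrite -eq_k'k; split=> // n /(walk_sub e'e) /M; rewrite eq_k'k.
- split; first exact: walk_sub W.
  by move=> n /shortcut [n' le_n'n /M le_kn']; apply: leq_trans le_n'n.
Qed.

Section SameInputDistances.
Variables (e e' : vtx -> vtx -> Prop) (d : nat).
Hypothesis dist_eq : forall i v k, dist e (X i) v k <-> dist e' (X i) v k.

Lemma rec_len_max_eq n D : rec_len_max e d n D <-> rec_len_max e' d n D.
Proof.
split=> [[[i Hi] M]|[[i Hi] M]]; split.
- by exists i; apply/dist_eq.
- by move=> j k /dist_eq /M.
- by exists i; apply/dist_eq.
- by move=> j k /dist_eq /M.
Qed.

Lemma mean_rec_len_eq m r : mean_rec_len e d m r <-> mean_rec_len e' d m r.
Proof.
split=> -[D [HD ->]]; exists D; split=> // n /HD; by rewrite rec_len_max_eq.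
Qed.

End SameInputDistances.

Lemma rec_len_max_exists e d n :
  shift_invariant e -> (exists k, walk e (X 0) (C d n%:Z) k) ->
  exists D, rec_len_max e d n D.
Proof.
move=> sh_e [k0 W]; have [D HD] := dist_exists W.
exists D; split; first by exists 0; rewrite add0r.
move=> i k /(dist_shift (- i) sh_e) /=.
by rewrite subrr addrAC subrr add0r => /(dist_unique HD) ->.
Qed.

Lemma mean_rec_len_exists e d m :
  shift_invariant e -> (forall n, exists k, walk e (X 0) (C d n%:Z) k) ->
  exists r, mean_rec_len e d m r.
Proof.
move=> sh_e W.
have /choice [D HD] : forall n, exists D, rec_len_max e d n D.
  by move=> n; apply: rec_len_max_exists.
by exists ((\sum_(1 <= n < m.+1) (D n)%:R) / m%:R); exists D.
Qed.

Section SkipVersusDilated.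
Variables (d : nat) (s : nat -> nat).

Local Notation skip := (skip_edge d s).
Local Notation dil := (dilated_edge d s).

Lemma skip_edge_shift : shift_invariant skip.
Proof.
move=> c [t|l t] [t'|l' t'] //=; first by case=> -> ->.
case=> [[? [? [-> ->]]]|[[? [? [-> ->]]]|[? [? [-> ->]]]]];
  by [left | right; left; rewrite addrAC | right; right; rewrite addrAC].
Qed.

Lemma dilated_edge_shift : shift_invariant dil.
Proof.
move=> c [t|l t] [t'|l' t'] //=; first by case=> -> ->.
by case=> [[? [? [-> ->]]]|[? [? [-> ->]]]]; [left | right; rewrite addrAC].
Qed.

Lemma dilated_sub_skip u v : dil u v -> skip u v.
Proof. by case: u v => [t|l t] [t'|l' t'] //= [H|H]; [left | right; right]. Qed.

(* The unit steps of a skip walk between hidden nodes are collected into the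
   time offset [j]; the remaining edges already are dilated edges. *)
Lemma skip_walk_hidden l t v k : walk skip (C l t) v k ->
  exists j k', (k' + j <= k)%N /\ walk dil (C l (t + j%:Z)) v k'.
Proof.
move Eu : (C l t) => u W; elim: W l t Eu => [w|x w y n Exw _ IH] l t Eu.
  by exists 0%N, 0%N; rewrite addr0 Eu; split=> //; apply: walk0.
subst x; case: w Exw IH => [t'|l' t'] //= Exw IH.
have [j [k' [le_k W]]] := IH _ _ erefl.
case: Exw => [[? [? [El Et]]]|[[? [? [El Et]]]|[? [? [El Et]]]]]; subst l' t'.
- exists j, k'.+1; split; first lia.
  by apply: walkS W; left.
- exists j.+1, k'; split; first lia.
  by rewrite -[j.+1]add1n PoszD addrA.
- exists j, k'.+1; split; first lia.
  by apply: walkS W; right; rewrite addrAC.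
Qed.

Hypotheses (d_gt0 : (0 < d)%N) (s1 : s 1 = 1%N).

Lemma dilated_walk_layer1 j t v k :
  walk dil (C 1 (t + j%:Z)) v k -> walk dil (C 1 t) v (k + j).
Proof.
elim: j t k => [|j IH] t k; first by rewrite addr0 addn0.
move=> W; rewrite addnS -addSn; apply: (walkS (w := C 1 (t + 1))).
  by right; rewrite s1.
by apply: IH; rewrite -addrA -PoszD add1n.
Qed.

Lemma dilated_walk_up l t : (1 <= l <= d)%N -> walk dil (C l t) (C d t) (d - l).
Proof.
move=> /andP [l_gt0 le_ld]; move Eq : (d - l)%N => q.
elim: q l l_gt0 le_ld Eq => [|q IH] l l_gt0 le_ld Eq.
  by rewrite (_ : l = d); [apply: walk0 | lia].
apply: (walkS (w := C l.+1 t)); first by left; do !split=> //; lia.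
by apply: IH; lia.
Qed.

Lemma skip_walk_input i v k : walk skip (X i) v k ->
  exists2 k', (k' <= k)%N & walk dil (X i) v k'.
Proof.
move Eu : (X i) => u W; case: W Eu => [w <-|x w v' n Exw W Ex]; first by exists 0%N; last exact: walk0.
subst x; case: w Exw W => [t|l t] //= [-> ->] /skip_walk_hidden [j [k' [le_k W]]].
exists (k' + j).+1; first lia.
exact: walkS (dilated_walk_layer1 W).
Qed.

Lemma dist_skip_dilated i v k : dist skip (X i) v k <-> dist dil (X i) v k.
Proof.
by apply: dist_sub_shortcut; [apply: dilated_sub_skip | apply: skip_walk_input].
Qed.

Lemma dilated_walk_input_output n : walk dil (X 0) (C d n%:Z) (d + n).
Proof.
have -> : (d + n = (d - 1 + n).+1)%N by lia.
apply: (walkS (w := C 1 0)); first by [].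
by apply: dilated_walk_layer1; rewrite add0r; apply: dilated_walk_up; lia.
Qed.

End SkipVersusDilated.

Theorem mainTheorem5 (d : nat) (hd : (2 <= d)%N) :
  let m := (2 ^ d.-1)%N in
  (forall (i : int) (n k : nat), (1 <= n <= m)%N ->
     (dist (skip_edge d pow2pred) (X i) (C d (i + n%:Z)%R) k <->
      dist (dilated_edge d pow2pred) (X i) (C d (i + n%:Z)%R) k)) /\
  (exists r : rat, mean_rec_len (skip_edge d pow2pred) d m r /\
                   mean_rec_len (dilated_edge d pow2pred) d m r) /\
  (forall r : rat, mean_rec_len (skip_edge d pow2pred) d m r <->
                   mean_rec_len (dilated_edge d pow2pred) d m r).
Proof.
move=> m; have d_gt0 : (0 < d)%N by lia.
have pow2pred1 : pow2pred 1 = 1%N by [].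
have dist_eq := dist_skip_dilated d_gt0 pow2pred1.
have mean_eq r := mean_rec_len_eq d dist_eq m r.
split; first by move=> i n k _; apply: dist_eq.
split; last exact: mean_eq.
have [r Hr] : exists r, mean_rec_len (dilated_edge d pow2pred) d m r.
  apply: mean_rec_len_exists; first exact: dilated_edge_shift.
  by move=> n; exists (d + n)%N; apply: dilated_walk_input_output.
by exists r; rewrite mean_eq.
Qed.
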